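(* Let $G$ be a graph that contains an induced $(n,m)$-necklace with $n\ge 5$ and $m\ge 1$ whose cycle has good neighbours in $G$. Then either $KB_e^2(G)$ or $KB_e^3(G)$ contains an induced $(n,m')$-necklace with $m'>m$ whose cycle has good neighbours (in $KB_e^2(G)$, resp. $KB_e^3(G)$).
   Context: All graphs are finite, simple and undirected. A biclique of a graph $G$ is a maximal (with respect to inclusion) induced subgraph of $G$ that is a complete bipartite graph $K_{p,q}$ with $p,q\ge 1$. The edge-biclique graph $KB_e(G)$ has one vertex for each biclique of $G$, two distinct vertices being adjacent iff the corresponding bicliques share at least one edge; $KB_e^0(G)=G$, $KB_e^k(G)=KB_e(KB_e^{k-1}(G))$. For $n\ge3$, $m\ge1$, the $(n,m)$-necklace is the graph on $n+m$ vertices consisting of an induced cycle $C_n$ and a complete graph $K_m$ such that, for one fixed edge $xy$ of the cycle, every vertex of the $K_m$ is adjacent to $x$ and $y$ and to no other vertex of the cycle. An induced cycle $C=v_0\ldots v_{n-1}$ ($n\ge5$) of a graph $H$ has good neighbours in $H$ if for every vertex $v\in V(H)\setminus V(C)$ and every $i$ (indices mod $n$), $\{v_{i-1},v_{i+1}\}\subseteq N(v)$ implies $v_i\in N(v)$. *)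

From mathcomp Require Import all_boot.
Set Implicit Arguments. Unset Strict Implicit. Unset Printing Implicit Defensive.

Record sgraph := SGraph {
  vert :> finType;
  adj : rel vert;
  adj_sym : symmetric adj;
  adj_irr : irreflexive adj }.

Arguments adj {s}.

Section Bicliques.
Variable G : sgraph.

Definition is_cbip (S : {set G}) : bool :=
  [exists X : {set G},
    [&& X \subset S, X != set0, S :\: X != set0,
        [forall x in X, forall y in X, ~~ adj x y],
        [forall x in S :\: X, forall y in S :\: X, ~~ adj x y] &
        [forall x in X, forall y in S :\: X, adj x y]]].

Definition is_biclique (S : {set G}) : bool :=
  is_cbip S && [forall T : {set G}, (S \subset T) && is_cbip T ==> (T == S)].

Definition biclique := {S : {set G} | is_biclique S}.

Definition kb_adj (B1 B2 : biclique) : bool :=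
  (B1 != B2) &&
  [exists u : G, exists v : G,
     [&& adj u v, u \in val B1 :&: val B2 & v \in val B1 :&: val B2]].

Lemma kb_adj_sym : symmetric kb_adj.
Proof. by move=> B1 B2; rewrite /kb_adj eq_sym setIC. Qed.

Lemma kb_adj_irr : irreflexive kb_adj.
Proof. by move=> B; rewrite /kb_adj eqxx. Qed.

End Bicliques.

Definition KBe (G : sgraph) : sgraph :=
  @SGraph (biclique G) (@kb_adj G) (@kb_adj_sym G) (@kb_adj_irr G).

Fixpoint KBe_iter (k : nat) (G : sgraph) : sgraph :=
  match k with 0 => G | k'.+1 => KBe (KBe_iter k' G) end.

(* (n,m)-necklace induced in H: cycle vertices c 0, ..., c (n-1) (indices mod n),
   clique vertices k 0, ..., k (m-1); the fixed cycle edge is x = c 0, y = c 1. *)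
Definition is_necklace (H : sgraph) (n m : nat) (c k : nat -> H) : Prop :=
  3 <= n /\ 1 <= m /\
  (forall i j, i < n -> j < n -> c i = c j -> i = j) /\
  (forall a b, a < m -> b < m -> k a = k b -> a = b) /\
  (forall i a, i < n -> a < m -> k a != c i) /\
  (forall i j, i < n -> j < n ->
     adj (c i) (c j) = (j == (i + 1) %% n) || (i == (j + 1) %% n)) /\
  (forall a b, a < m -> b < m -> adj (k a) (k b) = (a != b)) /\
  (forall a i, a < m -> i < n -> adj (k a) (c i) = (i == 0) || (i == 1)).

Definition good_neighbours (H : sgraph) (n : nat) (c : nat -> H) : Prop :=
  forall v : H, (forall i, i < n -> v != c i) ->
  forall i, i < n ->
    adj v (c ((i + n - 1) %% n)) -> adj v (c ((i + 1) %% n)) -> adj v (c i).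

Definition has_good_necklace (H : sgraph) (n m : nat) : Prop :=
  exists (c k : nat -> H), @is_necklace H n m c k /\ @good_neighbours H n c.

From mathcomp Require Import all_boot.
Set Implicit Arguments. Unset Strict Implicit. Unset Printing Implicit Defensive.

(* If G contains an induced (n,m)-necklace (n >= 5) whose cycle has good
   neighbours, then KB_e^3(G) contains an induced (n,m+1)-necklace with good
   neighbours; so the second alternative of the theorem always holds.

   A necklace is read as a good cycle (an induced cycle with good neighbours)
   together with a clique of m "ears", vertices seeing exactly the two ends of
   one fixed cycle edge. *)

Section CompleteBipartite.
Variable H : sgraph.

Lemma adj_neq (x y : H) : adj x y -> x != y.
Proof. by apply: contraTneq => ->; rewrite adj_irr. Qed.

Lemma cbip_sides (S : {set H}) : is_cbip S ->
  exists X : {set H}, forall x y, x \in S -> y \in S -> adj x y = ((x \in X) != (y \in X)).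
Proof.
case/existsP=> X /andP[_ /and5P[_ _ /forallP inX /forallP outX /forallP across]].
exists X => x y xS yS.
case xX: (x \in X); case yX: (y \in X) => /=.
- by apply/negbTE; move: (inX x); rewrite xX /= => /forallP/(_ y); rewrite yX.
- by move: (across x); rewrite xX /= => /forallP/(_ y); rewrite inE yX yS.
- by rewrite adj_sym; move: (across y); rewrite yX /= => /forallP/(_ x); rewrite inE xX xS.
- apply/negbTE; move: (outX x); rewrite inE xX xS /= => /forallP/(_ y).
  by rewrite inE yX yS.
Qed.

Lemma cbip_parity (S : {set H}) x y z : is_cbip S -> x \in S -> y \in S -> z \in S ->
  adj x z = (adj x y != adj y z).
Proof.
move=> /cbip_sides [X hX] xS yS zS; rewrite !hX //.
by case: (x \in X); case: (y \in X); case: (z \in X).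
Qed.

Lemma cbip_common_nbr (S : {set H}) x y z : is_cbip S -> x \in S -> y \in S -> z \in S ->
  adj z x -> adj z y -> ~~ adj x y.
Proof. by move=> cS xS yS zS zx zy; rewrite (cbip_parity (y:=z) cS) // adj_sym zx zy. Qed.

Lemma cbip_path3 (a b z : H) : adj z a -> adj z b -> ~~ adj a b -> is_cbip [set a; b; z].
Proof.
move=> za zb ab; apply/existsP; exists [set z].
have az : a != z by rewrite eq_sym adj_neq.
have bz : b != z by rewrite eq_sym adj_neq.
have leaf x : x \in [set a; b; z] :\: [set z] -> (x == a) || (x == b).
  by rewrite !inE => /andP[/negPf xz]; rewrite xz orbF.
apply/andP; split; first by rewrite sub1set !inE eqxx !orbT.
apply/and5P; split.
- by apply/set0Pn; exists z; rewrite inE.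
- by apply/set0Pn; exists a; rewrite !inE eqxx az.
- by apply/forallP=> x; apply/implyP; rewrite inE => /eqP->; apply/forallP=> y;
     apply/implyP; rewrite inE => /eqP->; rewrite adj_irr.
- apply/forallP=> x; apply/implyP => /leaf xab; apply/forallP=> y; apply/implyP => /leaf yab.
  by case/orP: xab => /eqP->; case/orP: yab => /eqP->; rewrite ?adj_irr // adj_sym.
- apply/forallP=> x; apply/implyP; rewrite inE => /eqP->; apply/forallP=> y.
  by apply/implyP => /leaf /orP[] /eqP->.
Qed.

(* Every complete bipartite set extends to a biclique (take a largest superset). *)
Lemma cbip_extend (S : {set H}) : is_cbip S -> {B : biclique H | S \subset val B}.
Proof.
move=> cS.
pose P := fun T : {set H} => (S \subset T) && is_cbip T.
have PS : P S by rewrite /P subxx cS.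
case: (@arg_maxnP _ S P (fun T => #|T|) PS) => T /andP[ST cT] maxT.
have bT : is_biclique T.
  rewrite /is_biclique cT /=; apply/forallP=> T'; apply/implyP=> /andP[TT' cT'].
  have : #|T'| <= #|T| by apply: maxT; rewrite /P cT' (subset_trans ST TT').
  by rewrite eq_sym eqEcard TT'.
by exists (exist _ T bT).
Qed.

Definition biclique_of (d : biclique H) (S : {set H}) : biclique H :=
  odflt d [pick B : biclique H | S \subset val B].

Lemma biclique_ofP (d : biclique H) (S : {set H}) :
  is_cbip S -> S \subset val (biclique_of d S).
Proof.
move=> cS; rewrite /biclique_of; case: pickP => [B hB|none] //=.
by have [B hB] := cbip_extend cS; rewrite none in hB.
Qed.

Lemma biclique_cbip (B : biclique H) : is_cbip (val B).
Proof. by case: B => S /= /andP[]. Qed.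

Lemma kb_adjP (B1 B2 : biclique H) : kb_adj B1 B2 ->
  B1 != B2 /\ exists u w, [/\ adj u w, u \in val B1, u \in val B2, w \in val B1 & w \in val B2].
Proof.
case/andP=> ne /existsP[u /existsP[w /and3P[uw]]].
by rewrite !inE => /andP[u1 u2] /andP[w1 w2]; split=> //; exists u, w.
Qed.

Lemma kb_adjI (B1 B2 : biclique H) u w : B1 != B2 -> adj u w ->
  u \in val B1 -> u \in val B2 -> w \in val B1 -> w \in val B2 -> kb_adj B1 B2.
Proof.
move=> ne uw u1 u2 w1 w2; rewrite /kb_adj ne /=.
by apply/existsP; exists u; apply/existsP; exists w; rewrite uw !inE u1 u2 w1 w2.
Qed.

End CompleteBipartite.

(* Cycles are indexed by a finite type I with mutually inverse successor s and
   predecessor p, such that any five consecutive indices are distinct (n >= 5). *)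
Section Cycle.
Variables (I : finType) (s p : I -> I).
Hypothesis sK : cancel s p.
Hypothesis pK : cancel p s.
Hypothesis five_distinct : forall i, uniq [:: p (p i); p i; i; s i; s (s i)].

Lemma s_inj : injective s. Proof. exact: can_inj sK. Qed.

Lemma eq_pl x y : (p x == y) = (x == s y).
Proof. by apply/eqP/eqP=> [<-|->]; rewrite ?pK ?sK. Qed.
Lemma eq_pr x y : (y == p x) = (s y == x).
Proof. by rewrite eq_sym eq_pl eq_sym. Qed.

Lemma five_distinct_s i : uniq [:: i; s i; s (s i); s (s (s i)); s (s (s (s i)))].
Proof. by have := five_distinct (s (s i)); rewrite !sK. Qed.

Lemma ne1 i : (s i == i) = false.
Proof.
by apply/negbTE; apply: contraTN (five_distinct_s i) => /eqP ->; rewrite /= !inE !eqxx ?orbT.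
Qed.
Lemma ne2 i : (s (s i) == i) = false.
Proof.
by apply/negbTE; apply: contraTN (five_distinct_s i) => /eqP ->; rewrite /= !inE !eqxx ?orbT.
Qed.
Lemma ne3 i : (s (s (s i)) == i) = false.
Proof.
by apply/negbTE; apply: contraTN (five_distinct_s i) => /eqP ->; rewrite /= !inE !eqxx ?orbT.
Qed.
Lemma ne4 i : (s (s (s (s i))) == i) = false.
Proof.
by apply/negbTE; apply: contraTN (five_distinct_s i) => /eqP ->; rewrite /= !inE !eqxx ?orbT.
Qed.
Lemma ne1' i : (i == s i) = false. Proof. by rewrite eq_sym ne1. Qed.
Lemma ne2' i : (i == s (s i)) = false. Proof. by rewrite eq_sym ne2. Qed.
Lemma ne3' i : (i == s (s (s i))) = false. Proof. by rewrite eq_sym ne3. Qed.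
Lemma ne4' i : (i == s (s (s (s i)))) = false. Proof. by rewrite eq_sym ne4. Qed.

(* Decides equalities between indices at cyclic distance at most 4. *)
Ltac idx := rewrite ?sK ?pK ?eq_pl ?eq_pr ?(inj_eq s_inj)
  ?ne1 ?ne2 ?ne3 ?ne4 ?ne1' ?ne2' ?ne3' ?ne4' ?eqxx.

Definition gcyc (H : sgraph) (c : I -> H) : Prop :=
  [/\ injective c, (forall i j, adj (c i) (c j) = (j == s i) || (i == s j)) &
   (forall v, (forall i, v != c i) -> forall i,
       adj v (c (p i)) -> adj v (c (s i)) -> adj v (c i))].

(* x is an "ear" on the cycle edge c q - c (s q): its only cycle neighbours are
   the two ends of that edge.  The clique of a necklace consists of ears. *)
Definition ear (H : sgraph) (c : I -> H) q (x : H) :=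
  (forall i, x != c i) /\ (forall i, adj x (c i) = (i == q) || (i == s q)).

Definition ear_clique (H : sgraph) (c : I -> H) q m (k : nat -> H) :=
  (forall a, a < m -> ear c q (k a)) /\
  (forall a b, a < m -> b < m -> adj (k a) (k b) = (a != b)).

Definition pos (H : sgraph) (c : I -> H) r (S : {set H}) :=
  [/\ c r \in S, c (s r) \in S, c (p r) \notin S & c (s (s r)) \notin S].

Section GoodCycle.
Variables (H : sgraph) (c : I -> H).
Hypothesis hc : gcyc c.

Lemma cinj : injective c. Proof. by case: hc. Qed.
Lemma cadj i j : adj (c i) (c j) = (j == s i) || (i == s j). Proof. by case: hc. Qed.

Lemma cadjs i : adj (c i) (c (s i)). Proof. by rewrite cadj eqxx. Qed.
Lemma cadjp i : adj (c (p i)) (c i). Proof. by rewrite cadj pK eqxx. Qed.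

Lemma good_nbr v i : adj v (c (p i)) -> adj v (c (s i)) -> (v == c i) || adj v (c i).
Proof.
case: (boolP [exists j, v == c j]) => [/existsP[j /eqP->]|nv].
  rewrite !cadj (inj_eq cinj) pK (inj_eq s_inj); case: (eqVneq j i) => [//|ji].
  by rewrite orbF /= => h1 /eqP h2; subst j; move: h1; idx.
case: hc => _ _ gn h1 h2; rewrite gn ?orbT // => j.
by apply: contraNneq nv => ->; apply/existsP; exists j.
Qed.

Lemma star_center (B : {set H}) i z : is_cbip B ->
  c (p i) \in B -> c i \in B -> c (s i) \in B -> z \in B -> z != c i ->
  [&& adj z (c i), ~~ adj z (c (p i)) & ~~ adj z (c (s i))].
Proof.
move=> cB hp hi hs zB zi.
have e1 : adj z (c i) = ~~ adj z (c (p i)).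
  by rewrite (cbip_parity (y:=c (p i)) cB) // cadjp; case: adj.
have e2 : adj z (c (s i)) = adj z (c (p i)).
  by rewrite (cbip_parity (y:=c (p i)) cB) // cadj; idx; case: adj.
case a1: (adj z (c (p i))); last by rewrite e1 e2 a1.
by have := good_nbr a1; rewrite e2 a1 => /(_ isT); rewrite (negPf zi) e1 a1.
Qed.

Lemma star_edge (B : {set H}) i u w : is_cbip B ->
  c (p i) \in B -> c i \in B -> c (s i) \in B ->
  u \in B -> w \in B -> adj u w -> (u == c i) || (w == c i).
Proof.
move=> cB hp hi hs uB wB uw.
case: (eqVneq u (c i)) => // ui; case: (eqVneq w (c i)) => // wi.
have /andP[a1 _] := star_center cB hp hi hs uB ui.
have /andP[a2 _] := star_center cB hp hi hs wB wi.
by move: uw; rewrite (cbip_parity (y:=c i) cB) // a1 adj_sym a2.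
Qed.

Lemma pos_cycle (S : {set H}) r j : is_cbip S -> pos c r S -> c j \in S ->
  (j == r) || (j == s r).
Proof.
move=> cS [hr hs hp hss] hj.
have := cbip_parity (y:=c r) cS hj hr hs; rewrite cadjs !cadj.
case/boolP: (j == r) => //= jr; case/boolP: (j == s r) => //= jsr.
rewrite (inj_eq s_inj) eq_sym (negPf jr) /= orbF.
case: (eqVneq r (s j)) => [e|_] /=.
  by move: hj; rewrite (_ : j = p r) ?(negPf hp) // e sK.
by move=> /eqP e; rewrite -e hj in hss.
Qed.

Lemma ear_path_plus x q : ear c q x -> is_cbip [set x; c (s (s q)); c (s q)].
Proof.
case=> _ ex; apply: cbip_path3; first by rewrite adj_sym ex eqxx orbT.
  by rewrite cadjs.
by rewrite ex; idx.
Qed.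

Lemma ear_path_minus x q : ear c q x -> is_cbip [set x; c (p q); c q].
Proof.
case=> _ ex; apply: cbip_path3; first by rewrite adj_sym ex eqxx.
  by rewrite adj_sym cadjp.
by rewrite ex; idx.
Qed.

Lemma ear_pos_plus x q (S : {set H}) : is_cbip S -> ear c q x ->
  [set x; c (s (s q)); c (s q)] \subset S -> pos c (s q) S.
Proof.
move=> cS [_ ex] /subsetP sub.
have xS : x \in S by apply: sub; rewrite !inE eqxx.
have h1 : c (s q) \in S by apply: sub; rewrite !inE eqxx !orbT.
have h2 : c (s (s q)) \in S by apply: sub; rewrite !inE eqxx !orbT.
split; rewrite ?sK //.
  apply/negP=> h; have := cbip_parity (y:=c (s q)) cS xS h1 h.
  by rewrite (adj_sym (c (s q))) cadjs !ex; idx.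
apply/negP=> h; have := cbip_parity (y:=c (s (s q))) cS xS h2 h.
by rewrite !ex cadjs; idx.
Qed.

Lemma ear_pos_minus x q (S : {set H}) : is_cbip S -> ear c q x ->
  [set x; c (p q); c q] \subset S -> pos c (p q) S.
Proof.
move=> cS [_ ex] /subsetP sub.
have xS : x \in S by apply: sub; rewrite !inE eqxx.
have h1 : c (p q) \in S by apply: sub; rewrite !inE eqxx !orbT.
have h2 : c q \in S by apply: sub; rewrite !inE eqxx !orbT.
split; rewrite ?pK //.
  apply/negP=> h; have := cbip_parity (y:=c (p q)) cS xS h1 h.
  by rewrite (adj_sym (c (p q))) cadjp !ex; idx.
apply/negP=> h; have := cbip_parity (y:=c q) cS xS h2 h.
by rewrite !ex cadjs; idx.
Qed.

Lemma pos_kb_adj r (B1 B2 : biclique H) : pos c r (val B1) -> pos c r (val B2) ->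
  B1 != B2 -> kb_adj B1 B2.
Proof. by move=> [h1 h2 _ _] [h3 h4 _ _] ne; apply: (kb_adjI ne (cadjs r)). Qed.

(* Indeed a vertex of
   both adjacent to c (p q) would, by the parities in g and h, be adjacent to
   c (s (s q)) and to exactly one of c q, c (s q), violating good neighbours. *)
Lemma gap_no_common_edge (g h : biclique H) q :
  c q \in val g -> c (s q) \in val g -> c (p q) \in val h -> c (s (s q)) \in val h ->
  c q \notin val h -> c (s q) \notin val h -> ~~ kb_adj g h.
Proof.
move=> gq gs hp hss nhq nhs.
have [cg ch] := (biclique_cbip g, biclique_cbip h).
have nonadj y : y \in val g -> y \in val h -> ~~ adj y (c (p q)).
  move=> yg yh; apply/negP => yp.
  have yq : y != c q by apply: contraNneq nhq => <-.
  have ys : y != c (s q) by apply: contraNneq nhs => <-.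
  have yss : adj y (c (s (s q))).
    by rewrite (cbip_parity (y:=c (p q)) ch) // yp cadj; idx.
  have ysq : adj y (c (s q)) = ~~ adj y (c q).
    by rewrite (cbip_parity (y:=c q) cg) // cadjs; case: adj.
  case yq': (adj y (c q)).
    have := @good_nbr y (s q); rewrite sK yq' yss => /(_ isT isT).
    by rewrite (negPf ys) ysq yq'.
  by have := @good_nbr y q; rewrite yp ysq yq' (negPf yq) => /(_ isT isT).
apply/negP => /kb_adjP [_ [a [b [ab ag ah bg bh]]]].
have := cbip_parity (y:=c (p q)) ch ah hp bh.
by rewrite ab (negPf (nonadj a ag ah)) adj_sym (negPf (nonadj b bg bh)).
Qed.

End GoodCycle.

Section Stars.
Variables (H : sgraph) (c : I -> H).
Hypothesis hc : gcyc c.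
Variable D : I -> KBe H.
Hypothesis hD : forall i, [set c (p i); c (s i); c i] \subset val (D i).

Lemma Dp i : c (p i) \in val (D i). Proof. by apply: (subsetP (hD i)); rewrite !inE eqxx. Qed.
Lemma Dc i : c i \in val (D i). Proof. by apply: (subsetP (hD i)); rewrite !inE eqxx !orbT. Qed.
Lemma Ds i : c (s i) \in val (D i). Proof. by apply: (subsetP (hD i)); rewrite !inE eqxx !orbT. Qed.

Lemma DpS i : c i \in val (D (s i)). Proof. by have := Dp (s i); rewrite sK. Qed.

Lemma D_edge i u w : u \in val (D i) -> w \in val (D i) -> adj u w -> (u == c i) || (w == c i).
Proof. exact: (star_edge hc (biclique_cbip (D i)) (Dp i) (Dc i) (Ds i)). Qed.

Lemma adj_D (t : KBe H) j : t != D j -> c j \in val t -> c (s j) \in val t -> adj t (D j).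
Proof. by move=> ne hj hs; apply: (kb_adjI ne (cadjs hc j)) => //; [exact: Dc | exact: Ds]. Qed.

Lemma adj_Dp (t : KBe H) j : t != D j -> c (p j) \in val t -> c j \in val t -> adj t (D j).
Proof. by move=> ne hp hj; apply: (kb_adjI ne (cadjp hc j)) => //; [exact: Dp | exact: Dc]. Qed.

Lemma adj_D_edge (t : KBe H) j : adj t (D j) ->
  exists y, [/\ c j \in val t, y \in val t, y \in val (D j), y != c j & adj (c j) y].
Proof.
move=> /kb_adjP [_ [u [w [uw u1 u2 w1 w2]]]].
case/orP: (D_edge u2 w2 uw) => /eqP e; subst.
  by exists w; split=> //; rewrite eq_sym adj_neq.
by exists u; split=> //; rewrite ?adj_neq // adj_sym.
Qed.

Lemma adj_D_center (t : KBe H) j : adj t (D j) -> c j \in val t.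
Proof. by case/adj_D_edge=> y []. Qed.

Lemma D_inj : injective D.
Proof.
move=> i j e; apply/eqP/negPn/negP=> ij.
have h1 := @D_edge j (c (p i)) (c i); rewrite -e in h1.
have h2 := @D_edge j (c i) (c (s i)); rewrite -e in h2.
move: (h1 (Dp i) (Dc i) (cadjp hc i)) (h2 (Dc i) (Ds i) (cadjs hc i)).
rewrite !(inj_eq (cinj hc)) (negPf ij) orbF /= => /eqP <-.
by idx.
Qed.

Lemma D_adj i j : adj (D i) (D j) = (j == s i) || (i == s j).
Proof.
apply/idP/idP.
  move=> /kb_adjP [ne [u [w [uw u1 u2 w1 w2]]]].
  have ij : i != j by apply: contraNneq ne => ->.
  case/orP: (D_edge u1 w1 uw) => /eqP ei; case/orP: (D_edge u2 w2 uw) => /eqP ej; subst.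
  - by move/(cinj hc): ej => e; rewrite e eqxx in ij.
  - by rewrite (cadj hc) in uw.
  - by rewrite (cadj hc) orbC in uw.
  - by move/(cinj hc): ej => e; rewrite e eqxx in ij.
case/orP=> /eqP ->.
  by rewrite adj_sym; apply: adj_D; rewrite ?(inj_eq D_inj) ?DpS ?Dc //; idx.
by apply: adj_D; rewrite ?(inj_eq D_inj) ?DpS ?Dc //; idx.
Qed.

(* Good neighbours lift: a biclique t meeting D (p i) and D (s i) contains
   c (p i) and, through a neighbour y of c (p i), the vertex c i; so t meets D i. *)
Lemma D_good_nbr (t : KBe H) : (forall i, t != D i) -> forall i,
  adj t (D (p i)) -> adj t (D (s i)) -> adj t (D i).
Proof.
move=> nt i a1 a2.
have [y [tp yt yD yne hy]] := adj_D_edge a1.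
have ts := adj_D_center a2.
have ys : adj y (c (s i)).
  by rewrite (cbip_parity (y:=c (p i)) (biclique_cbip t)) // adj_sym hy (cadj hc); idx.
have := star_center hc (biclique_cbip (D (p i))) (Dp (p i)) (Dc (p i)) (Ds (p i)) yD yne.
rewrite pK => /and3P[_ _ nyi].
have := good_nbr hc (v:=y) (i:=i); rewrite adj_sym hy ys (negPf nyi) orbF => /(_ isT isT) /eqP ey.
by subst y; apply: adj_Dp.
Qed.

Lemma gcycD : gcyc D.
Proof. by split; [exact: D_inj | exact: D_adj | exact: D_good_nbr]. Qed.

Lemma pos_ear (S : KBe H) r : pos c r (val S) -> ear D r S.
Proof.
move=> ps; have cS := biclique_cbip S.
have cin j : c j \in val S -> (j == r) || (j == s r) by apply: pos_cycle.
case: (ps) => [r1 r2 _ _].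
have nD i : S != D i.
  apply/eqP => eS.
  have := cin i; rewrite eS Dc => /(_ isT) /orP[] /eqP ei; subst i.
    by have := cin (p r); rewrite eS Dp => /(_ isT); idx.
  by have := cin (s (s r)); rewrite eS Ds => /(_ isT); idx.
split=> // i; apply/idP/idP; first by move/adj_D_center; apply: cin.
case/orP=> /eqP ->; first exact: adj_D.
by apply: adj_Dp; rewrite ?sK.
Qed.

(* Bicliques through the induced paths that an ear x on c q - c (s q) forms
   with the following, resp. preceding, cycle edge (D q is just a default). *)
Definition ext_plus q (x : H) : KBe H := biclique_of (D q) [set x; c (s (s q)); c (s q)].
Definition ext_minus q (x : H) : KBe H := biclique_of (D q) [set x; c (p q); c q].

Lemma ext_plusP q x : ear c q x ->
  x \in val (ext_plus q x) /\ pos c (s q) (val (ext_plus q x)).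
Proof.
move=> ex; have sub := biclique_ofP (D q) (ear_path_plus hc ex).
split; first by apply: (subsetP sub); rewrite !inE eqxx.
exact: (ear_pos_plus hc (biclique_cbip _) ex sub).
Qed.

Lemma ext_minusP q x : ear c q x ->
  x \in val (ext_minus q x) /\ pos c (p q) (val (ext_minus q x)).
Proof.
move=> ex; have sub := biclique_ofP (D q) (ear_path_minus hc ex).
split; first by apply: (subsetP sub); rewrite !inE eqxx.
exact: (ear_pos_minus hc (biclique_cbip _) ex sub).
Qed.

(* A clique of ears on c q - c (s q), each put into a biclique positioned at an
   adjacent edge r, yields a clique of ears of D on D r - D (s r): the bicliques
   share the edge c r - c (s r), and are distinct because two adjacent ears
   cannot lie in one biclique together with their common cycle neighbour. *)
Lemma ear_clique_lift q r m k (B : nat -> KBe H) : ear_clique c q m k ->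
  (forall a, a < m -> k a \in val (B a) /\ pos c r (val (B a))) ->
  q = s r \/ r = s q -> ear_clique D r m B.
Proof.
move=> [ek kk] hB hr.
have [j [jB kj]] : exists j, (forall a, a < m -> c j \in val (B a)) /\
                              (forall a, a < m -> adj (c j) (k a)).
  case: hr => e; [exists (s r) | exists r]; split=> a am;
    have [_ [Br Bs _ _]] := hB a am; case: (ek a am) => _ ea => //;
    by rewrite adj_sym ea -e eqxx ?orbT.
split=> [a am|a b am bm]; first exact: pos_ear (hB a am).2.
case: (eqVneq a b) => [->|ab]; first by rewrite adj_irr.
have [ka pa] := hB a am; have [kb pb] := hB b bm.
apply: (pos_kb_adj hc pa pb); apply/eqP => e; rewrite -e in kb.
have := cbip_common_nbr (biclique_cbip (B a)) ka kb (jB a am) (kj a am) (kj b bm).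
by rewrite kk // ab.
Qed.

Lemma ear_clique_plus q m k : ear_clique c q m k ->
  ear_clique D (s q) m (fun a => ext_plus q (k a)).
Proof.
move=> ek; apply: (ear_clique_lift ek _ (or_intror erefl)) => a am.
by apply: ext_plusP; apply: ek.1.
Qed.

Lemma ear_clique_minus q m k : ear_clique c q m k ->
  ear_clique D (p q) m (fun a => ext_minus q (k a)).
Proof.
move=> ek; apply: (ear_clique_lift ek _ (or_introl (esym (pK q)))) => a am.
by apply: ext_minusP; apply: ek.1.
Qed.

Lemma ear_clique_snoc r m (Z : nat -> KBe H) (W : KBe H) : ear_clique D r m Z ->
  (forall a, a < m -> pos c r (val (Z a))) -> pos c r (val W) ->
  (forall a, a < m -> W != Z a) ->
  ear_clique D r m.+1 (fun a => if a < m then Z a else W).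
Proof.
move=> [eZ ZZ] pZ pW nW; split=> [a _|a b am bm].
  by case: ifP => am; [exact: eZ | exact: pos_ear].
case: (eqVneq a b) => [->|ab]; first by rewrite adj_irr.
case: ifP => ha; case: ifP => hb.
- by rewrite ZZ.
- by apply: (pos_kb_adj hc (pZ a ha) pW); rewrite eq_sym nW.
- exact: (pos_kb_adj hc pW (pZ b hb) (nW b hb)).
- have [ea eb] : a = m /\ b = m.
    by split; apply/eqP; rewrite eqn_leq -ltnS ?am ?bm leqNgt ?ha ?hb.
  by rewrite ea eb eqxx in ab.
Qed.

(* Non-adjacent ears on the edges at q and at s (s q) lie in different bicliques
   through the middle edge c (s q) - c (s (s q)): by parity around c (s q)
   they would be adjacent. *)
Lemma ext_plus_neq_ext_minus q x y : ear c q x -> ear c (s (s q)) y -> ~~ adj x y ->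
  ext_plus q x != ext_minus (s (s q)) y.
Proof.
move=> ex ey nxy; apply/eqP => e.
have [xB [sB _ _ _]] := ext_plusP ex.
have [yB _] := ext_minusP ey; rewrite -e in yB.
have := cbip_parity (y:=c (s q)) (biclique_cbip _) xB sB yB.
case: ex => _ ->; case: ey => _ ey; rewrite (negPf nxy) (adj_sym (c _)) ey; idx.
by [].
Qed.

(* An edge u w in both is a pair of bicliques of H to which gap_no_common_edge
   applies, after reading off their memberships from the parities around D. *)
Lemma gap_no_common_edge_KB (X Y : KBe (KBe H)) q :
  pos D (p q) (val X) -> pos D (s q) (val Y) -> ~~ adj X Y.
Proof.
move=> pX pY.
have gD := gcycD.
have [cX cY] := (biclique_cbip X, biclique_cbip Y).
case: (pX) => Xp Xq _ _; rewrite pK in Xq.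
case: (pY) => Ys Yss _ _.
have notD t : t \in val X -> t \in val Y -> forall j, t != D j.
  move=> tX tY j; apply/eqP => e; subst t.
  have := pos_cycle gD cX pX tX; have := pos_cycle gD cY pY tY; rewrite pK.
  by case/orP=> /eqP ->; idx.
have parX t : t \in val X -> adj t (D q) = ~~ adj t (D (p q)).
  by move=> tX; rewrite (cbip_parity (y:=D (p q)) cX) // (cadjp gD); case: adj.
have parY t : t \in val Y -> adj t (D (s (s q))) = ~~ adj t (D (s q)).
  by move=> tX; rewrite (cbip_parity (y:=D (s q)) cY) // (cadjs gD); case: adj.
have toward t : t \in val X -> t \in val Y -> adj t (D q) -> adj t (D (s q)).
  move=> tX tY tq; apply/negPn/negP => nts.
  have := good_nbr gD (v:=t) (i:=s q); rewrite sK tq parY // => /(_ isT nts) /orP[].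
    by move=> e; move: (notD t tX tY (s q)); rewrite e.
  by move=> e; move: nts; rewrite e.
apply/negP => /kb_adjP [_ [u [w [uw uX uY wX wY]]]].
wlog uq : u w uw uX uY wX wY / adj u (D q).
  move=> base; case uq: (adj u (D q)); first exact: (base u w).
  apply: (base w u) => //; first by rewrite adj_sym.
  by have := cbip_parity (y:=D q) cX uX Xq wX; rewrite uw uq adj_sym; case: adj.
have us := toward u uX uY uq.
have wq : ~~ adj w (D q).
  by have := cbip_parity (y:=D q) cX uX Xq wX; rewrite uw uq adj_sym; case: adj.
have wp : adj w (D (p q)) by move: (parX w wX); rewrite (negPf wq); case: adj.
have ws : ~~ adj w (D (s q)).
  by have := cbip_parity (y:=D (s q)) cY uY Ys wY; rewrite uw us adj_sym; case: adj.
have wss : adj w (D (s (s q))) by rewrite parY.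
have [nwq nws] : c q \notin val w /\ c (s q) \notin val w.
  split; apply/negP => h.
    by move/negP: wq; apply; exact: adj_Dp (notD w wX wY q) (adj_D_center wp) h.
  by move/negP: ws; apply; exact: adj_D (notD w wX wY (s q)) h (adj_D_center wss).
move/negP: (gap_no_common_edge hc (adj_D_center uq) (adj_D_center us)
  (adj_D_center wp) (adj_D_center wss) nwq nws); apply; exact: uw.
Qed.

End Stars.

Lemma star_cycle (H : sgraph) (c : I -> H) : gcyc c ->
  {D : I -> KBe H | gcyc D /\ forall i, [set c (p i); c (s i); c i] \subset val (D i)}.
Proof.
move=> hc.
have cb i : is_cbip [set c (p i); c (s i); c i].
  by apply: cbip_path3; rewrite ?(adj_sym (c i)) ?(cadjp hc) ?(cadjs hc) // (cadj hc); idx.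
pose D i := sval (cbip_extend (cb i)).
have hD i : [set c (p i); c (s i); c i] \subset val (D i) := svalP (cbip_extend (cb i)).
by exists D; split; [exact: (gcycD hc hD) | exact: hD].
Qed.

(* Starting from a clique of m >= 1 ears on c q - c (s q),
   three rounds of passing to stars move the ears around the cycle:
     level 1: the m ears go to the edge at p q (ext_minus), and one extra copy
              of the ear k 0 goes to the edge at s q (ext_plus);
     level 2: both groups move forward, to q and to s (s q);
     level 3: the m ears move forward to s q and the extra one backward to s q.
   The extra ear arrives at the same edge as the others but is a new vertex,
   because at level 2 its predecessor was two edges away from theirs, and
   bicliques positioned with such a gap share no edge. *)
Lemma necklace_grows (G : sgraph) (c : I -> G) q m (k : nat -> G) :
  gcyc c -> ear_clique c q m k -> 0 < m ->
  exists (c3 : I -> KBe (KBe (KBe G))) (k3 : nat -> KBe (KBe (KBe G))),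
    gcyc c3 /\ ear_clique c3 (s q) m.+1 k3.
Proof.
move=> hc ek m0.
have [D1 [g1 h1]] := star_cycle hc.
have [D2 [g2 h2]] := star_cycle g1.
have [D3 [g3 h3]] := star_cycle g2.
pose A a := ext_minus c D1 q (k a).
pose A' := ext_plus c D1 q (k 0).
have eA : ear_clique D1 (p q) m A := ear_clique_minus hc h1 ek.
have eA' : ear D1 (s q) A' := pos_ear hc h1 (ext_plusP hc D1 (ek.1 0 m0)).2.
pose X a := ext_plus D1 D2 (p q) (A a).
pose Y := ext_plus D1 D2 (s q) A'.
have eX : ear_clique D2 q m X by have := ear_clique_plus g1 h2 eA; rewrite pK.
have pX a : a < m -> pos D1 q (val (X a)).
  by move=> am; have := (ext_plusP g1 D2 (eA.1 a am)).2; rewrite pK.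
have pY : pos D1 (s (s q)) (val Y) := (ext_plusP g1 D2 eA').2.
have eY : ear D2 (s (s q)) Y := pos_ear g1 h2 pY.
pose Z a := ext_plus D2 D3 q (X a).
pose W := ext_minus D2 D3 (s (s q)) Y.
have eZ : ear_clique D3 (s q) m Z := ear_clique_plus g2 h3 eX.
have pZ a : a < m -> pos D2 (s q) (val (Z a)) := fun am => (ext_plusP g2 D3 (eX.1 a am)).2.
have pW : pos D2 (s q) (val W) by have := (ext_minusP g2 D3 eY).2; rewrite sK.
have nW a : a < m -> W != Z a.
  move=> am; rewrite eq_sym; apply: (ext_plus_neq_ext_minus g2 D3 (eX.1 a am) eY).
  have pX' : pos D1 (p (s q)) (val (X a)) by rewrite sK; apply: pX.
  exact: (gap_no_common_edge_KB hc h1 pX' pY).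
exists D3, (fun a => if a < m then Z a else W); split=> //.
exact: (ear_clique_snoc g2 h3 eZ pZ pW nW).
Qed.

End Cycle.

Section Ordinals.
Variable n : nat.
Hypothesis n5 : 5 <= n.

Lemma n_gt0 : 0 < n. Proof. exact: leq_trans n5. Qed.

Lemma val_iter_ordS k (i : 'I_n) : val (iter k (@ordS n) i) = (i + k) %% n.
Proof.
elim: k => [|k IH] /=; first by rewrite addn0 modn_small.
by rewrite IH -addn1 modnDml addn1 addnS.
Qed.

Lemma iter_ordS_eq (r : 'I_n) a b :
  (iter a (@ordS n) r == iter b (@ordS n) r) = (a %% n == b %% n).
Proof. by rewrite -val_eqE /= !val_iter_ordS eqn_modDl. Qed.

Lemma five_distinct_ord (i : 'I_n) :
  uniq [:: ord_pred (ord_pred i); ord_pred i; i; ordS i; ordS (ordS i)].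
Proof.
set j := ord_pred (ord_pred i).
have -> : i = ordS (ordS j) by rewrite /j !ord_predK.
rewrite !ordSK.
have -> : [:: j; ordS j; ordS (ordS j); ordS (ordS (ordS j)); ordS (ordS (ordS (ordS j)))]
  = map (fun k => iter k (@ordS n) j) [:: 0; 1; 2; 3; 4] by [].
rewrite (map_inj_in_uniq (s := [:: 0; 1; 2; 3; 4])) //.
have small a : a \in [:: 0; 1; 2; 3; 4] -> a < n.
  by rewrite !inE => /or4P[|||/orP[]] /eqP ->; apply: leq_trans n5.
by move=> a b ha hb /eqP; rewrite iter_ordS_eq !modn_small ?small // => /eqP.
Qed.

Definition ord0n : 'I_n := Ordinal n_gt0.

Lemma necklace_cycle (H : sgraph) (c k : nat -> H) m :
  is_necklace n m c k -> good_neighbours n c ->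
  gcyc (@ordS n) (@ord_pred n) (fun i : 'I_n => c i) /\
  ear_clique (@ordS n) (fun i : 'I_n => c i) ord0n m k.
Proof.
move=> [_ [_ [ci [_ [kc [cadj [kadj kcadj]]]]]]] gn.
split; last split.
- split.
  + by move=> i j /ci e; apply: val_inj; apply: e.
  + by move=> i j; rewrite cadj // -!val_eqE /= !addn1.
  + move=> v hv i h1 h2; apply: (gn v _ i (ltn_ord i)).
    * by move=> j jn; apply: (hv (Ordinal jn)).
    * by move: h1; rewrite /= subn1.
    * by move: h2; rewrite /= addn1.
- move=> a am; split; first by move=> i; apply: kc.
  by move=> i; rewrite kcadj // -!val_eqE /= modn_small // (leq_trans _ n5).
- exact: kadj.
Qed.

(* Conversely, a good cycle on 'I_n with a clique of m >= 1 ears on an edge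
   r - ordS r is a necklace with good neighbours: relabel the cycle from r. *)
Lemma cycle_necklace (H : sgraph) (c : 'I_n -> H) r m (k : nat -> H) : 0 < m ->
  gcyc (@ordS n) (@ord_pred n) c -> ear_clique (@ordS n) c r m k -> has_good_necklace H n m.
Proof.
move=> m0 [cinj cadj cgn] [ek kk].
pose x j := iter j (@ordS n) r.
have xS j : @ordS n (x j) = x j.+1 by [].
have xeq i j : i < n -> j < n -> (x i == x j) = (i == j).
  by move=> hi hj; rewrite /x iter_ordS_eq !modn_small.
have [n0 n1] : 0 < n /\ 1 < n by split; apply: leq_trans n5.
exists (fun j => c (x j)), k; split; last first.
  move=> v hv i hi h1 h2.
  have hv' t : v != c t.
    have -> : t = x ((t + n - r) %% n).
      apply: val_inj; rewrite /x val_iter_ordS modnDmr addnBA; last first.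
        exact: ltnW (leq_trans (ltn_ord r) (leq_addl _ _)).
      by rewrite addnC addnK modnDr modn_small.
    by apply: hv; rewrite ltn_mod.
  have e1 : x ((i + 1) %% n) = @ordS n (x i).
    by apply/eqP; rewrite xS /x iter_ordS_eq modn_mod addn1.
  have e2 : x ((i + n - 1) %% n) = @ord_pred n (x i).
    apply: (@ordS_inj n); rewrite ord_predK xS; apply/eqP; rewrite /x iter_ordS_eq.
    by rewrite -addn1 modnDml subnK ?modnDr // addn_gt0 n0 orbT.
  by rewrite e1 in h2; rewrite e2 in h1; exact: cgn.
split; first exact: leq_trans n5.
split=> //.
split; first by move=> i j hi hj /cinj /eqP; rewrite xeq // => /eqP.
split.
  move=> a b am bm e; apply/eqP; apply/negPn/negP => ab.
  by have := kk a b am bm; rewrite e adj_irr (negPf ab).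
split; first by move=> i a _ am; case: (ek a am).
split.
  move=> i j hi hj; rewrite cadj !xS /x !iter_ordS_eq (modn_small hi) (modn_small hj).
  by rewrite !addn1.
split; first exact: kk.
move=> a i am hi; case: (ek a am) => _ ->.
by rewrite (_ : r = x 0) // xS !xeq.
Qed.

End Ordinals.

Theorem mainTheorem10 (G : sgraph) (n m : nat) :
  5 <= n -> 1 <= m -> has_good_necklace G n m ->
  (exists m', m < m' /\ has_good_necklace (KBe_iter 2 G) n m') \/
  (exists m', m < m' /\ has_good_necklace (KBe_iter 3 G) n m').
Proof.
move=> n5 m1 [c [k [neck good]]]; right; exists m.+1; split=> //.
have [hc ek] := necklace_cycle n5 neck good.
have [c3 [k3 [hc3 ek3]]] :=
  necklace_grows (@ordSK n) (@ord_predK n) (five_distinct_ord n5) hc ek m1.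
exact: (cycle_necklace n5 (ltn0Sn m) hc3 ek3).
Qed.
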